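(* Let $\mathcal{I}$ be an ideal on $\omega$ (containing $\mathrm{fin}$) which is $F_\sigma$, or which is (an isomorphic copy on $\omega$ of) $\mathrm{fin}^\alpha$ for some $\alpha < \omega_1$. Then $\mathcal{I}$ is uniformly weakly $P^+$.
   Context: $\mathrm{fin}$ is the ideal of finite subsets of $\omega$; $\mathcal{I}^+$ denotes subsets not in $\mathcal{I}$; $A \subseteq_{\mathcal{I}} B$ means $A\setminus B \in \mathcal{I}$. $F_\sigma$ refers to $\mathcal{I}$ as a subset of $2^\omega$. Ideals $\mathcal{I}$ on $\Omega$ and $\mathcal{J}$ on $\Omega'$ are isomorphic if there is a bijection $f:\Omega\to\Omega'$ with $A \in \mathcal{J} \iff f^{-1}(A) \in \mathcal{I}$ for all $A \subseteq \Omega'$. The ideals $\mathrm{fin}^\alpha$ on countable sets $X^\alpha$ ($1\le\alpha<\omega_1$) are defined recursively: $\mathrm{fin}^1 = \mathrm{fin}$ on $X^1=\omega$; $\mathrm{fin}^{\alpha+1}$ is the ideal on $X^{\alpha+1} = \omega \times X^\alpha$ given by $A \in \mathrm{fin}^{\alpha+1}$ iff $\{n : (A)_n \notin \mathrm{fin}^\alpha\}$ is finite, where $(A)_n = \{y : (n,y)\in A\}$; for limit $\alpha$, fixing a strictly increasing sequence $\alpha_n$ with supremum $\alpha$, $\mathrm{fin}^\alpha$ is the ideal on $X^\alpha = \bigcup_n \{n\}\times X^{\alpha_n}$ given by $A \in \mathrm{fin}^\alpha$ iff $\{n : A \cap (\{n\}\times X^{\alpha_n}) \notin \mathrm{fin}^{\alpha_n}\}$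 is finite (identifying $\{n\}\times X^{\alpha_n}$ with $X^{\alpha_n}$). $\mathcal{I}$ is uniformly weakly $P^+$ if there is a Borel function $\Phi$ such that for every $\subseteq$-decreasing sequence $\langle A_n : n\in\omega\rangle$ of $\mathcal{I}$-positive sets, $\Phi(\langle A_n\rangle)\in\mathcal{I}^+$ and $\Phi(\langle A_n\rangle)\subseteq_{\mathcal{I}} A_n$ for every $n$. *)

From HB Require Import structures.
From mathcomp Require Import all_boot all_order all_algebra.
From mathcomp Require Import all_classical all_reals all_analysis.
From mathcomp Require Import borel_hierarchy cantor.
Set Implicit Arguments. Unset Strict Implicit. Unset Printing Implicit Defensive.
Local Open Scope classical_set_scope.

Definition is_ideal (I : set (set nat)) : Prop :=
  [/\ (forall A B : set nat, B `<=` A -> I A -> I B),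
      (forall A B : set nat, I A -> I B -> I (A `|` B)),
      (forall A : set nat, finite_set A -> I A) &
      ~ I setT ].

Definition charf (A : set nat) : cantor_space := fun n => `[< A n >].

Definition Fsigma_ideal (I : set (set nat)) : Prop := Fsigma (charf @` I).

Definition Borel_fun {T U : topologicalType} (f : T -> U) : Prop :=
  forall V : set U, open V -> <<s (@open T) >> (f @^-1` V).

Definition seq_space : Type := prod_topology (fun _ : nat => cantor_space).

Definition unif_weakly_Pplus (I : set (set nat)) : Prop :=
  exists Phi : seq_space -> cantor_space,
    Borel_fun Phi /\
    forall A : nat -> set nat,
      (forall n, ~ I (A n)) ->
      (forall n, A n.+1 `<=` A n) ->
      let B := [set m | Phi (fun n => charf (A n)) m] in
      ~ I B /\ (forall n, I (B `\` A n)).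

(** Countable ordinals >= 1 as Brouwer trees (base 1, successor, limit). *)
Inductive ctree : Type :=
| CT1 : ctree
| CTS : ctree -> ctree
| CTL : (nat -> ctree) -> ctree.

Inductive cle : ctree -> ctree -> Prop :=
| cle_one : forall x, cle CT1 x
| cle_succ : forall x y, cle x y -> cle (CTS x) (CTS y)
| cle_cocone : forall x f k, cle x (f k) -> cle x (CTL f)
| cle_limiting : forall f x, (forall k, cle (f k) x) -> cle (CTL f) x.

Definition clt (x y : ctree) : Prop := cle (CTS x) y.

Fixpoint wf_ctree (t : ctree) : Prop :=
  match t with
  | CT1 => True
  | CTS s => wf_ctree s
  | CTL f => (forall n, wf_ctree (f n)) /\ (forall n, clt (f n) (f n.+1))
  end.

Fixpoint Xo (t : ctree) : Type :=
  match t with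
  | CT1 => nat
  | CTS s => (nat * Xo s)%type
  | CTL f => {n : nat & Xo (f n)}
  end.

Fixpoint fin_alpha (t : ctree) : set (Xo t) -> Prop :=
  match t return set (Xo t) -> Prop with
  | CT1 => fun A => finite_set A
  | CTS s => fun A =>
      finite_set [set n : nat | ~ @fin_alpha s [set y | A (n, y)]]
  | CTL f => fun A =>
      finite_set [set n : nat | ~ @fin_alpha (f n) [set y | A (existT _ n y)]]
  end.

Definition ideal_iso {Om : Type} (I : set (set nat)) (J : set (set Om)) : Prop :=
  exists h : nat -> Om, bijective h /\ forall A : set Om, J A <-> I (h @^-1` A).

(* Both kinds of ideals have the form "I X iff the set of columns on which X
   is positive lies in some layer K n", for a hereditary, increasing family of
   layers, each of which is decided by finite initial segments.  For an F_sigma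
   ideal the columns are single points and K n X says that every initial part of
   X is covered by a member of the n-th closed piece of I (compactness of the
   Cantor space turns this into a cover of X); for fin^alpha the columns are the
   top-level blocks of X^alpha and K n X says X <= [0, n).
   Given decreasing positive sets A_n with column supports S_n, give column k
   the index f(k), the largest n <= k for which S_n restricted to [0, k) is not
   in K n, and let Phi(A) agree with A_f(k) on column k.  As f tends to
   infinity, Phi(A) is almost included in every A_n.  If the support of Phi(A)
   were in K j, let p be least with S_j restricted to [0, p) outside K j: every
   k < p in S_j has f(k) <= j, so Phi(A) is positive on column k, and S_j
   restricted to [0, p) would lie in K j.  Each bit of Phi(A) depends on
   finitely many Borel bits of A, so Phi is Borel. *)

From mathcomp Require Import all_boot all_order all_algebra.
From mathcomp Require Import all_classical all_reals all_analysis.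
Set Implicit Arguments. Unset Strict Implicit. Unset Printing Implicit Defensive.
Local Open Scope classical_set_scope.

Lemma finite_natP (X : set nat) : finite_set X <-> exists n, X `<=` `I_n.
Proof.
split=> [/finite_seqP[s ->]|[n /sub_finite_set]]; last exact.
exists (\max_(a <- s) a).+1 => a /= as_.
by rewrite ltnS; apply: leq_bigmax_seq.
Qed.

Lemma decr_subset (T : Type) (A : nat -> set T) :
  (forall n, A n.+1 `<=` A n) -> {homo A : i j / i <= j >-> j `<=` i}.
Proof.
move=> A_decr i j ij; apply/subsetPset.
by apply: (nonincreasing_seqP A).1 ij => n; apply/subsetPset.
Qed.

Section TopLayer.
Variables (K : nat -> set nat -> Prop) (S : nat -> set nat).

Definition top_layer (m : nat) : nat :=
  \max_(n < m.+1 | `[< ~ K n (S n `&` `I_m) >]) n.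

Lemma top_layer_le m : top_layer m <= m.
Proof. by apply/bigmax_leqP => n _; rewrite -ltnS. Qed.

Hypothesis K_subset : forall n X Y, X `<=` Y -> K n Y -> K n X.
Hypothesis K_mono : forall n n' X, n <= n' -> K n X -> K n' X.
Hypothesis S_decr : forall n, S n.+1 `<=` S n.
Hypothesis S_notin : forall n, exists p, ~ K n (S n `&` `I_p).

Lemma top_layer_le_of n m : K n (S n `&` `I_m) -> top_layer m <= n.
Proof.
move=> KSn; apply/bigmax_leqP => j /asboolP KSj; rewrite leqNgt; apply/negP => nj.
apply: KSj; apply: (K_mono (ltnW nj)); apply: K_subset KSn => a [Sja am].
by split=> //; exact: (decr_subset S_decr (ltnW nj)).
Qed.

Lemma top_layer_ge n : exists N, forall m, N <= m -> n <= top_layer m.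
Proof.
have [p KSp] := S_notin n; exists (maxn p n) => m; rewrite geq_max => /andP[pm nm].
apply: (@leq_bigmax_cond _ _ _ (Ordinal (nm : n < m.+1))); apply/asboolP => KSm.
by apply: KSp; apply: K_subset KSm => a [Sa ap]; split=> //; exact: leq_trans ap pm.
Qed.

Lemma diagonal_notin n : ~ K n [set m | S (top_layer m) m].
Proof.
have exP : exists p, `[< ~ K n (S n `&` `I_p) >].
  by have [p KSp] := S_notin n; exists p; exact/asboolP.
case: (ex_minnP exP) => p /asboolP KSp p_min KD; apply: KSp.
apply: K_subset KD => m [Snm mp] /=.
have KSm : K n (S n `&` `I_m).
  by apply: contrapT => /asboolP /p_min; rewrite leqNgt mp.
exact: (decr_subset S_decr (top_layer_le_of KSm)).
Qed.

End TopLayer.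

Lemma eq_top_layer K (S S' : nat -> set nat) m :
    (forall n, n <= m -> S n `&` `I_m = S' n `&` `I_m) ->
  top_layer K S m = top_layer K S' m.
Proof. by move=> SS'; apply: eq_bigl => n; rewrite SS' // -ltnS ltn_ord. Qed.

Lemma finitely_determined_measurable d (T : algebraOfSetsType d)
    (F : finType) (E : F -> set T) (P : set T) :
  (forall i, measurable (E i)) ->
  (forall x y, (forall i, E i x <-> E i y) -> P x -> P y) -> measurable P.
Proof.
move=> mE PE; pose pattern x := [ffun i => `[< E i x >]].
have -> : P = \bigcup_(p in pattern @` P) [set x | pattern x = p].
  apply/seteqP; split=> [x Px|x [_ [y Py <-]] /= exy]; first by exists (pattern x).
  apply: PE Py => i; move/ffunP/(_ i): exy; rewrite !ffunE => e.
  by rewrite -[E i x]asboolE -[E i y]asboolE e.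
apply: fin_bigcup_measurable => [|p _]; first exact: finite_finset.
have -> : [set x | pattern x = p] = \bigcap_(i in [set: F]) (if p i then E i else ~` E i).
  apply/seteqP; split=> x /=.
    by move=> <- i _; rewrite ffunE; case: asboolP.
  move=> Ex; apply/ffunP => i; rewrite ffunE; have := Ex i I.
  by case: (p i) => [/asboolP ->|/asboolPn/negbTE ->].
apply: (fin_bigcap_measurable finite_finset) => i _.
by case: (p i); [|apply: measurableC]; exact: mE.
Qed.

Lemma measurable_finite_set d (T : measurableType d) (P : nat -> set T) :
  (forall k, measurable (P k)) -> measurable [set x | finite_set [set k | P k x]].
Proof.
move=> mP.
have -> : [set x | finite_set [set k | P k x]] =
    \bigcup_N \bigcap_(k in [set k | N <= k]) ~` P k.
  apply/seteqP; split=> x /=.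
    by move=> /finite_natP[N PN]; exists N => // k /= Nk /PN /=; rewrite ltnNge Nk.
  move=> [N _ PN]; apply/finite_natP; exists N => k Pk /=; rewrite ltnNge.
  by apply/negP => /PN.
by apply: bigcupT_measurable => N; apply: bigcap_measurableType => k _; exact/measurableC.
Qed.

Local Notation borel_seq := (g_sigma_algebraType (@open seq_space)).
Local Notation borel := (@measurable _ borel_seq).

Lemma open_cantor_coord a b : open [set z : cantor_space | z a = b].
Proof.
have -> : [set z : cantor_space | z a = b] = proj a @^-1` [set b] by [].
by apply: open_comp => [z _|]; [exact: proj_continuous | exact: discrete_open].
Qed.

Lemma borel_seq_coord n a : borel [set x : seq_space | x n a].
Proof.
apply: sub_sigma_algebra.
have -> : [set x : seq_space | x n a] =
  proj n @^-1` [set z : cantor_space | z a = true] by [].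
by apply: open_comp => [x _|]; [exact: proj_continuous | exact: open_cantor_coord].
Qed.

Definition cylinder (z : cantor_space) (N : nat) : set cantor_space :=
  [set y | forall a, a < N -> y a = z a].

Lemma nbhs_cylinder (z : cantor_space) (V : set cantor_space) :
  nbhs z V -> exists N, cylinder z N `<=` V.
Proof.
move=> Vz; apply: contrapT => noN.
have notV N : exists y, cylinder z N y /\ ~ V y.
  apply: contrapT => allV; apply: noN; exists N => y zy.
  by apply: contrapT => Vy; apply: allV; exists y.
have [g gP] := choice notV.
have g_cvg : g @ \oo --> z.
  apply/pointwise_cvgP => a B /nbhs_singleton Bza.
  by exists a.+1 => // N /= aN; rewrite (proj1 (gP N)).
by have [N _ /(_ N (leqnn N))] := g_cvg V Vz; exact: (proj2 (gP N)).
Qed.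

Lemma borel_fun_cantor (f : seq_space -> cantor_space) :
  (forall a, borel [set x | f x a]) -> Borel_fun f.
Proof.
move=> fB V oV; suff : borel (f @^-1` V) by [].
have -> : f @^-1` V = \bigcup_N [set x | cylinder (f x) N `<=` V].
  apply/seteqP; split=> [x Vfx|x [N _]]; last by apply.
  by have [N] := nbhs_cylinder (open_nbhs_nbhs (conj oV Vfx)); exists N.
apply: bigcupT_measurable => N.
apply: (@finitely_determined_measurable _ borel_seq 'I_N (fun a => [set x | f x a]))
  => // x y fxy cylV.
apply: subset_trans cylV => z /= zy a aN; rewrite zy //.
by apply/idP/idP => /(fxy (Ordinal aN)).
Qed.

Definition column (t : ctree) : Xo t -> nat :=
  match t with
  | CT1 => id
  | CTS s => fst
  | CTL f => @projT1 _ _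
  end.

Definition column_positive (t : ctree) : nat -> set (Xo t) -> Prop :=
  match t with
  | CT1 => fun k Y => Y k
  | CTS s => fun k Y => ~ fin_alpha [set y | Y (k, y)]
  | CTL f => fun k Y => ~ fin_alpha [set y | Y (existT _ k y)]
  end.

Lemma fin_alphaE t (Y : set (Xo t)) :
  fin_alpha Y <-> finite_set [set k | column_positive k Y].
Proof. by case: t Y. Qed.

Lemma fin_alpha_set0 t : @fin_alpha t set0.
Proof.
elim: t => [|s IH|f IH] /=; first exact: finite_set0.
  by apply: sub_finite_set (finite_set0 nat) => n /= []; exact: IH.
by apply: sub_finite_set (finite_set0 nat) => n /= []; exact: IH.
Qed.

Lemma fin_alpha_subset t (X Y : set (Xo t)) : X `<=` Y -> fin_alpha Y -> fin_alpha X.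
Proof.
elim: t X Y => [|s IH|f IH] X Y XY /=; first exact: sub_finite_set.
  by apply: sub_finite_set => n nX nY; apply/nX/(IH _ _ _ nY) => y; exact: XY.
by apply: sub_finite_set => n nX nY; apply/nX/(IH _ _ _ _ nY) => y; exact: XY.
Qed.

Lemma column_positive_subset t k (X Y : set (Xo t)) :
  X `<=` Y -> column_positive k X -> column_positive k Y.
Proof.
case: t k X Y => [|s|f] k X Y XY /=; first exact: XY.
  by apply: contra_not; apply: fin_alpha_subset => y; exact: XY.
by apply: contra_not; apply: fin_alpha_subset => y; exact: XY.
Qed.

Lemma column_positive_restrict t k (Y : set (Xo t)) :
  column_positive k Y -> column_positive k (Y `&` [set p | column p = k]).
Proof.
by case: t k Y => [|s|f] k Y //= nY; apply: contra_not nY; apply: fin_alpha_subset.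
Qed.

Lemma column_positive_set0 t k : ~ @column_positive t k set0.
Proof. by case: t k => [|s|f] k //= []; exact: fin_alpha_set0. Qed.

Lemma borel_fin_alpha t (phi : Xo t -> nat) n :
  borel [set x | fin_alpha [set p | x n (phi p)]].
Proof.
elim: t phi => [|s IH|f IH] phi /=; apply: measurable_finite_set => k.
- exact: borel_seq_coord.
- exact: measurableC (IH (fun y => phi (k, y))).
- exact: measurableC (IH k (fun y => phi (existT _ k y))).
Qed.

Lemma borel_column_positive t (phi : Xo t -> nat) k n :
  borel [set x | column_positive k [set p | x n (phi p)]].
Proof.
case: t phi => [|s|f] phi /=; first exact: borel_seq_coord.
  exact: measurableC (borel_fin_alpha (fun y => phi (k, y)) n).
exact: measurableC (borel_fin_alpha (fun y => phi (existT _ k y)) n).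
Qed.

Section ColumnDiagonal.
Variables (I : set (set nat)) (K : nat -> set nat -> Prop).
Variables (col : nat -> nat) (Pos : nat -> set nat -> Prop).
Hypothesis K_subset : forall n X Y, X `<=` Y -> K n Y -> K n X.
Hypothesis K_mono : forall n n' X, n <= n' -> K n X -> K n' X.
Hypothesis K_finitary : forall n X, ~ K n X -> exists p, ~ K n (X `&` `I_p).
Hypothesis K_initial : forall N, exists n, K n `I_N.
Hypothesis Pos_subset : forall k X Y, X `<=` Y -> Pos k X -> Pos k Y.
Hypothesis Pos_restrict : forall k X, Pos k X -> Pos k (X `&` col @^-1` [set k]).
Hypothesis Pos_set0 : forall k, ~ Pos k set0.
Hypothesis Pos_borel : forall k n, borel [set x : seq_space | Pos k [set m | x n m]].
Hypothesis I_layers : forall X, I X <-> exists n, K n [set k | Pos k X].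

Definition support (x : seq_space) (n : nat) : set nat :=
  [set k | Pos k [set m | x n m]].

Definition column_diagonal (x : seq_space) : cantor_space :=
  fun m => x (top_layer K (support x) (col m)) m.

Lemma column_diagonal_borel : Borel_fun column_diagonal.
Proof.
apply: borel_fun_cantor => m; set k := col m.
pose E (i : ('I_k.+1 * 'I_k) + 'I_k.+1) : set seq_space :=
  match i with
  | inl (j, a) => [set x : seq_space | Pos a [set m | x j m]]
  | inr n => [set x : seq_space | x n m]
  end.
apply: (@finitely_determined_measurable _ borel_seq _ E) => [[[j a]|n]|x y xy].
- exact: Pos_borel.
- exact: borel_seq_coord.
rewrite /column_diagonal -/k /=.
have -> : top_layer K (support y) k = top_layer K (support x) k.
  apply: eq_top_layer => j jk; apply/seteqP; split=> a [Sa ak]; split=> //.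
    by apply/(xy (inl (Ordinal (jk : j < k.+1), Ordinal ak))).
  by apply/(xy (inl (Ordinal (jk : j < k.+1), Ordinal ak))).
by move=> /(xy (inr (Ordinal (top_layer_le _ _ k : _ < k.+1)))).
Qed.

Lemma column_diagonal_spec (A : nat -> set nat) :
  (forall n, ~ I (A n)) -> (forall n, A n.+1 `<=` A n) ->
  let B := [set m | column_diagonal (fun n => charf (A n)) m] in
  ~ I B /\ (forall n, I (B `\` A n)).
Proof.
move=> A_pos A_decr B.
pose S n := [set k | Pos k (A n)].
have supportE : support (fun n => charf (A n)) = S.
  apply/funext => n; congr (fun X => [set k | Pos k X]).
  by apply/seteqP; split=> m /asboolP.
have BE m : B m <-> A (top_layer K S (col m)) m.
  by rewrite /B /= /column_diagonal supportE; split=> /asboolP.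
have S_decr n : S n.+1 `<=` S n by move=> k; apply: Pos_subset.
have S_notin n : exists p, ~ K n (S n `&` `I_p).
  by apply: K_finitary => KS; apply: (A_pos n); apply/I_layers; exists n.
split.
  move=> /I_layers[j KB].
  apply: (diagonal_notin K_subset K_mono S_decr S_notin (n := j)).
  apply: K_subset KB => k /Pos_restrict; apply: Pos_subset => m [Am /= mk].
  by apply/BE; rewrite mk.
move=> n; apply/I_layers; have [N topN] := top_layer_ge K_subset S_notin n.
have [n' Kn'] := K_initial N; exists n'; apply: K_subset Kn' => k /= Pk.
rewrite ltnNge; apply/negP => Nk; apply: (@Pos_set0 k).
apply: Pos_subset (Pos_restrict Pk) => m [[/BE Bm nAm] /= mk]; apply: nAm.
by rewrite mk in Bm; exact: (decr_subset A_decr (topN _ Nk)).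
Qed.

Lemma column_diagonal_unif_weakly_Pplus : unif_weakly_Pplus I.
Proof.
exists column_diagonal; split; first exact: column_diagonal_borel.
exact: column_diagonal_spec.
Qed.

End ColumnDiagonal.

Lemma closed_initial_covers (G : set cantor_space) (X : set nat) : closed G ->
  (forall m, exists Y, X `&` `I_m `<=` Y /\ G (charf Y)) ->
  exists2 Z, X `<=` Z & G (charf Z).
Proof.
move=> G_closed /choice[Y YP].
have G_compact : compact G.
  exact: subclosed_compact G_closed cantor_space_compact (subsetT G).
have [|z [Gz z_cluster]] := G_compact (charf \o Y @ \oo) _.
  by exists 0 => // m _; exact: (proj2 (YP m)).
have zE : charf [set a | z a] = z by apply/funext => a; rewrite /charf asboolb.
exists [set a | z a]; last by rewrite zE.
move=> a Xa /=; case za : (z a) => //.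
have Y_a : (charf \o Y @ \oo) [set w | w a = true].
  by exists a.+1 => // m /= am; apply/asboolP/(proj1 (YP m)).
have z_a : nbhs z [set w | w a = false].
  by apply: open_nbhs_nbhs; split; [exact: open_cantor_coord | exact: za].
by have [w [/= -> ]] := z_cluster _ _ Y_a z_a.
Qed.

Lemma charf_inj : injective charf.
Proof.
move=> X Y XY; apply/funext => a; rewrite -[X a]asboolE -[Y a]asboolE.
exact: (congr1 (fun z : cantor_space => is_true (z a)) XY).
Qed.

Lemma Fsigma_unif_weakly_Pplus (I : set (set nat)) :
  is_ideal I -> Fsigma_ideal I -> unif_weakly_Pplus I.
Proof.
move=> [I_subset _ I_finite _] [F F_closed IF].
pose G n := \bigcup_(j in `I_n.+1) F j.
have G_closed n : closed (G n).
  by apply: closed_bigcup => [|j _]; [exact: finite_II | exact: F_closed].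
pose K n X := forall m, exists Y, X `&` `I_m `<=` Y /\ G n (charf Y).
have I_layers X : I X <-> exists n, K n X.
  split=> [IX|[n /(closed_initial_covers (G_closed n))[Z XZ [j _ FZ]]]].
    have [j _ FX] : (\bigcup_j F j) (charf X) by rewrite -IF; exists X.
    by exists j => m; exists X; split=> [a []|]; last exists j => /=.
  have [W IW /charf_inj WZ] : (charf @` I) (charf Z) by rewrite IF; exists j.
  by apply: I_subset XZ _; rewrite -WZ.
apply: (@column_diagonal_unif_weakly_Pplus I K id (fun k X => X k)) => //.
- move=> n X Y XY KY m; have [Z [YZ GZ]] := KY m; exists Z; split=> //.
  by move=> a [Xa am]; apply: YZ; split=> //; exact: XY.
- move=> n n' X nn' KX m; have [Y [XY [j jn FY]]] := KX m; exists Y; split=> //.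
  by exists j => //=; apply: leq_trans jn _; rewrite ltnS.
- move=> n X /existsNP[p /forallNP noY]; exists p => /(_ p)[Y [XY GY]].
  by apply: (noY Y); split=> // a [Xa ap]; apply: XY.
- by move=> N; apply/I_layers; exact: I_finite (finite_II N).
- by move=> k X Y; apply.
- by move=> k [].
- by move=> k n; exact: borel_seq_coord.
Qed.

Lemma fin_alpha_iso_unif_weakly_Pplus (I : set (set nat)) (t : ctree) :
  ideal_iso I (@fin_alpha t) -> unif_weakly_Pplus I.
Proof.
move=> [h [[g hK gK] I_iso]].
have preimK X : h @^-1` [set p | X (g p)] = X by apply/funext => m /=; rewrite hK.
apply: (@column_diagonal_unif_weakly_Pplus I (fun n X => X `<=` `I_n)
  (fun m => column (h m)) (fun k X => column_positive k [set p | X (g p)])).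
- by move=> n X Y XY YI a /XY /YI.
- by move=> n n' X nn' XI a /XI /leq_trans; apply.
- move=> n X /existsNP[a /not_implyP[Xa an]]; exists a.+1 => XI.
  exact: an (XI a (conj Xa (ltnSn a))).
- by move=> N; exists N.
- by move=> k X Y XY; apply: column_positive_subset => p; exact: XY.
- move=> k X /column_positive_restrict; apply: column_positive_subset => p [Xgp /= <-].
  by split=> //=; rewrite gK.
- by move=> k; exact: column_positive_set0.
- by move=> k n; exact: borel_column_positive.
- by move=> X; rewrite -{1}(preimK X) -I_iso fin_alphaE finite_natP.
Qed.

Unset Implicit Arguments.

Theorem lemma5p3 (I : set (set nat)) :
  is_ideal I ->
  (Fsigma_ideal I \/
   exists t : ctree, wf_ctree t /\ ideal_iso I (@fin_alpha t)) ->
  unif_weakly_Pplus I.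
Proof.
move=> I_ideal [I_Fsigma | [t [_ I_iso]]].
  exact: Fsigma_unif_weakly_Pplus.
exact: fin_alpha_iso_unif_weakly_Pplus I_iso.
Qed.
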